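(* For every infinite cardinal $\kappa$ and every natural number $N$ there is a digraph $D$ with $\chi(D)>\kappa$ whose underlying undirected graph has no odd cycle of length less than $N$.
   Context: A digraph is a pair $D=(V,E)$ with $E\subseteq V^2$ such that $uv\in E$ implies $vu\notin E$; its underlying undirected graph has an edge $uv$ iff $uv\in E$ or $vu\in E$. The dichromatic number $\chi(D)$ is the minimal number of acyclic vertex sets (sets inducing no directed cycle) needed to cover the vertex set of $D$. *)

From Stdlib Require Import Arith.

Definition digraph {V : Type} (E : V -> V -> Prop) : Prop :=
  forall u v, E u v -> ~ E v u.

Definition und_adj {V : Type} (E : V -> V -> Prop) (u v : V) : Prop :=
  E u v \/ E v u.

Definition cycle_of_length {V : Type} (R : V -> V -> Prop) (k : nat)
  (f : nat -> V) : Prop :=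
  (forall i j, i < k -> j < k -> f i = f j -> i = j) /\
  (forall i, i < k -> R (f i) (f ((i + 1) mod k))).

Definition acyclic_set {V : Type} (E : V -> V -> Prop) (S : V -> Prop) : Prop :=
  ~ exists k f, 2 <= k /\ cycle_of_length E k f /\ (forall i, i < k -> S (f i)).

Definition has_cycle_of_length {V : Type} (R : V -> V -> Prop) (k : nat) : Prop :=
  3 <= k /\ exists f, cycle_of_length R k f.

Definition infinite_type (K : Type) : Prop :=
  forall l : list K, exists x, ~ List.In x l.

(* chi(D) > |K|: V cannot be covered by |K| acyclic sets, i.e. for every
   map c : V -> K some colour class is not acyclic. *)
Definition dichromatic_gt {V : Type} (E : V -> V -> Prop) (K : Type) : Prop :=
  forall c : V -> K, exists x : K, ~ acyclic_set E (fun v => c v = x).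

(* G is the arc digraph of a transitive tournament on a huge set, iterated N times.
   Taking arc digraphs turns "no proper colouring with subsets of C" into "no proper
   colouring with C", so the underlying graph of G has chromatic number larger than
   |C| for a prescribed C, by Cantor's theorem for the tournament.  A ranking of G by the
   tournament order shows that each arc digraph step raises the odd girth by 2.
   H is the digraph on increasing pairs a < b of a long linear order, with
   (a,b) -> (b,c) and (c,d) -> (a,b) whenever b < c; comparing, for every b, the sets
   of colours of pairs ending and starting at b shows that every K-colouring of H has
   a monochromatic directed triangle.  In the product with edges (u,x) -> (v,y) for u,v
   adjacent in G and x -> y in H, a K-colouring is a colouring of G by maps H -> K, so
   two adjacent vertices of G carry the same map, and a monochromatic triangle of that
   map lifts to a monochromatic directed 6-cycle.  Odd cycles project to odd closed
   walks of G. *)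

From Stdlib Require Import Arith Lia Classical ClassicalDescription FinFun.
From mathcomp Require ssreflect ssrfun ssrbool eqtype boolp wochoice.

Definition strict_total {T : Type} (lt : T -> T -> Prop) : Prop :=
  (forall x, ~ lt x x) /\ (forall x y z, lt x y -> lt y z -> lt x z) /\
  (forall x y, x <> y -> lt x y \/ lt y x).

Module WellOrdering.
Import ssreflect ssrfun ssrbool eqtype boolp wochoice.

Lemma exists_strict_total (T : Type) : exists lt : T -> T -> Prop, strict_total lt.
Proof.
have [R wo] := well_ordering_principle (classicType T).
have woT : wo_chain R predT by move=> A _; exact: wo.
have tot := wo_chainW woT; have anti := wo_chain_antisymmetric woT.
have trans (x y z : classicType T) : R x y -> R y z -> R x z.
  move=> Rxy Ryz; have [|m [[Am lbm] _]] := wo [pred u | (u == x) || (u == y) || (u == z)].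
    by exists x; rewrite inE eqxx.
  have [Rmx Rmy Rmz] : [/\ R m x, R m y & R m z] by split; apply: lbm; rewrite inE eqxx ?orbT.
  move: Am; rewrite inE => /orP[/orP[]|] /eqP Em; subst m => //.
    by rewrite (anti x y) // Rxy Rmx.
  by rewrite -(anti y z) // Ryz Rmy.
exists (fun x y => R x y /\ x <> y); split; [|split].
- by move=> x [].
- move=> x y z [Rxy nxy] [Ryz nyz]; split; first exact: trans Rxy Ryz.
  by move=> exz; subst z; apply: nxy; apply: anti; rewrite // Rxy Ryz.
- move=> x y nxy; case/orP: (tot x y isT isT) => ?; [left|right]; split=> //; auto.
Qed.
End WellOrdering.

Record dgraph := DGraph { vertex : Type; edge : vertex -> vertex -> Prop }.

Definition arc_digraph (D : dgraph) : dgraph :=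
  DGraph {p : vertex D * vertex D | edge D (fst p) (snd p)}
         (fun p q => snd (proj1_sig p) = fst (proj1_sig q)).

Definition tail {D : dgraph} (p : vertex (arc_digraph D)) : vertex D := fst (proj1_sig p).
Definition head {D : dgraph} (p : vertex (arc_digraph D)) : vertex D := snd (proj1_sig p).

Lemma edge_tail_head (D : dgraph) (p : vertex (arc_digraph D)) : edge D (tail p) (head p).
Proof. exact (proj2_sig p). Qed.

Definition powerset (T : Type) : Type := T -> Prop.

Definition uncolourable {V : Type} (R : V -> V -> Prop) (C : Type) : Prop :=
  forall phi : V -> C, exists u v, R u v /\ phi u = phi v.

Lemma und_adj_sym {V : Type} (R : V -> V -> Prop) u v : und_adj R u v -> und_adj R v u.
Proof. unfold und_adj; tauto. Qed.

Lemma powerset_no_injection (A : Type) (h : powerset A -> A) : ~ Injective h.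
Proof.
  intros inj.
  pose (diag := fun a => exists X, h X = a /\ ~ X a).
  destruct (classic (diag (h diag))) as [Hd|Hd].
  - pose proof Hd as [X [HX nX]]. apply inj in HX. subst X. contradiction.
  - apply Hd. exists diag. auto.
Qed.

Lemma uncolourable_tournament (A : Type) (lt : powerset A -> powerset A -> Prop) :
  (forall x y, x <> y -> lt x y \/ lt y x) -> uncolourable (und_adj lt) A.
Proof.
  intros tot phi.
  destruct (classic (exists u v, u <> v /\ phi u = phi v)) as [[u [v [Huv E]]]|Hn].
  - exists u, v. exact (conj (tot u v Huv) E).
  - exfalso. apply (powerset_no_injection A phi). intros X Y E.
    apply NNPP. intros Hne. apply Hn. eauto.
Qed.

(* Colour each vertex [x] of [D] by the set of colours of the arcs leaving [x]:
   if [x -> y] and both sets agree, some arc [(y, z)] is coloured like [(x, y)]. *)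
Lemma uncolourable_arc_digraph (D : dgraph) (C : Type) :
  uncolourable (und_adj (edge D)) (powerset C) ->
  uncolourable (und_adj (edge (arc_digraph D))) C.
Proof.
  intros HD c.
  pose (out := fun x (a : C) => exists p, tail p = x /\ c p = a).
  assert (consecutive : forall x y, edge D x y -> out x = out y ->
            exists p q, und_adj (edge (arc_digraph D)) p q /\ c p = c q).
  { intros x y Exy Eout.
    pose (p := exist (fun p => edge D (fst p) (snd p)) (x, y) Exy : vertex (arc_digraph D)).
    assert (Hy : out y (c p)) by (rewrite <- Eout; exists p; auto).
    destruct Hy as [q [Hq Ecq]]. exists p, q. split; [left; exact (eq_sym Hq) | auto]. }
  destruct (HD out) as [x [y [[Exy|Eyx] Eout]]].
  - exact (consecutive x y Exy Eout).
  - destruct (consecutive y x Eyx (eq_sym Eout)) as [p [q [Hpq Ecpq]]].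
    exists q, p. split; [apply und_adj_sym |]; auto.
Qed.

Lemma uncolourable_iter_arc_digraph (m : nat) : forall (D : dgraph) (C : Type),
  uncolourable (und_adj (edge D)) (Nat.iter m powerset C) ->
  uncolourable (und_adj (edge (Nat.iter m arc_digraph D))) C.
Proof.
  induction m as [|m IH]; intros D C HD; [exact HD|].
  rewrite Nat.iter_succ_r in HD. apply uncolourable_arc_digraph, IH, HD.
Qed.

Fixpoint count_below (s : nat -> bool) (n : nat) : nat :=
  match n with 0 => 0 | S n => count_below s n + (if s n then 1 else 0) end.

Lemma count_below_pos s n : 0 < count_below s n -> exists t, t < n /\ s t = true.
Proof.
  induction n as [|n IH]; simpl; [lia|]. intros H.
  destruct (s n) eqn:E; [exists n; auto|].
  destruct IH as [t [? ?]]; [lia|]. exists t. auto.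
Qed.

Lemma count_below_odd_pos s n :
  Nat.odd (count_below s n) = true -> exists t, t < n /\ s t = true.
Proof.
  intros H. apply count_below_pos. destruct (count_below s n); [discriminate | lia].
Qed.

Lemma count_below_eq0 s n : count_below s n = 0 -> forall t, t < n -> s t = false.
Proof.
  induction n as [|n IH]; simpl; intros H t Ht; [lia|].
  destruct (s n) eqn:E; [lia|].
  destruct (Nat.eq_dec t n); [subst; auto | apply IH; lia].
Qed.

Lemma count_below_add (a b c : nat -> bool) n :
  (forall t, t < n ->
     (if a t then 1 else 0) = (if b t then 1 else 0) + (if c t then 1 else 0)) ->
  count_below a n = count_below b n + count_below c n.
Proof.
  induction n as [|n IH]; simpl; intros H; auto.
  rewrite IH by (intros; apply H; lia). rewrite (H n) by lia. lia.
Qed.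

Lemma count_below_true n : count_below (fun _ => true) n = n.
Proof. induction n; simpl; lia. Qed.

Definition changes (g : nat -> bool) (t : nat) : bool := negb (Bool.eqb (g t) (g (S t))).

Lemma even_count_changes g n :
  Nat.even (count_below (changes g) n) = Bool.eqb (g 0) (g n).
Proof.
  induction n as [|n IH]; simpl.
  - destruct (g 0); reflexivity.
  - rewrite Nat.even_add, IH. unfold changes. destruct (g 0), (g n), (g (S n)); reflexivity.
Qed.

Lemma count_changes_eq0 g n :
  count_below (changes g) n = 0 -> forall t, t <= n -> g t = g 0.
Proof.
  intros H. induction t as [|t IH]; intros Ht; auto.
  assert (Ct := count_below_eq0 _ _ H t ltac:(lia)). unfold changes in Ct.
  rewrite <- (IH ltac:(lia)). destruct (g t), (g (S t)); simpl in Ct; congruence.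
Qed.

Definition pause_walk {V : Type} (R : V -> V -> Prop) (w : nat -> V) (s : nat -> bool)
  (l : nat) : Prop :=
  forall t, t < l -> if s t then R (w t) (w (S t)) else w t = w (S t).

Definition odd_girth_ge {V : Type} (R : V -> V -> Prop) (g : nat) : Prop :=
  forall l w s, pause_walk R w s l -> w l = w 0 ->
    Nat.odd (count_below s l) = true -> g <= count_below s l.

Lemma odd_girth_ge1 {V : Type} (R : V -> V -> Prop) : odd_girth_ge R 1.
Proof.
  intros l w s _ _ Hodd. destruct (count_below s l); [discriminate | lia].
Qed.

Definition ranked {V L : Type} (R : V -> V -> Prop) (lt : L -> L -> Prop) : Prop :=
  exists rank : V -> L, forall x y, R x y -> lt (rank x) (rank y).

Lemma ranked_irrefl {V L : Type} (R : V -> V -> Prop) (lt : L -> L -> Prop) :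
  (forall a, ~ lt a a) -> ranked R lt -> forall x, ~ R x x.
Proof. intros irr [rank Hr] x H. exact (irr _ (Hr _ _ H)). Qed.

Lemma ranked_arc_digraph {L : Type} (D : dgraph) (lt : L -> L -> Prop) :
  ranked (edge D) lt -> ranked (edge (arc_digraph D)) lt.
Proof.
  intros [rank Hr]. exists (fun p => rank (tail p)). intros p q Hpq.
  simpl in Hpq. unfold tail. rewrite <- Hpq. apply Hr, edge_tail_head.
Qed.

Lemma ranked_iter_arc_digraph {L : Type} m (D : dgraph) (lt : L -> L -> Prop) :
  ranked (edge D) lt -> ranked (edge (Nat.iter m arc_digraph D)) lt.
Proof. intros HD. induction m; simpl; [exact HD | apply ranked_arc_digraph, IHm]. Qed.

Lemma ranked_walk_progress {V L : Type} (R : V -> V -> Prop) (lt : L -> L -> Prop)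
  (rank : V -> L) :
  (forall a b c, lt a b -> lt b c -> lt a c) -> (forall x y, R x y -> lt (rank x) (rank y)) ->
  forall w s l, pause_walk R w s l ->
    (w l = w 0 /\ forall t, t < l -> s t = false) \/ lt (rank (w 0)) (rank (w l)).
Proof.
  intros tr Hr w s l Hw. induction l as [|l IH]; [left; split; auto; lia|].
  assert (Hl := Hw l (Nat.lt_succ_diag_r l)).
  destruct IH as [[E Hp]|Hlt]; [intros t Ht; apply Hw; lia| |].
  - destruct (s l) eqn:Es.
    + right. rewrite <- E. exact (Hr _ _ Hl).
    + left. split; [congruence|]. intros t Ht.
      destruct (Nat.eq_dec t l) as [->|]; [auto | apply Hp; lia].
  - right. destruct (s l); [eauto | rewrite <- Hl; exact Hlt].
Qed.

Lemma ranked_walk_not_closed {V L : Type} (R : V -> V -> Prop) (lt : L -> L -> Prop)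
  (rank : V -> L) :
  (forall a, ~ lt a a) -> (forall a b c, lt a b -> lt b c -> lt a c) ->
  (forall x y, R x y -> lt (rank x) (rank y)) ->
  forall w s l, pause_walk R w s l -> (exists t, t < l /\ s t = true) -> w l <> w 0.
Proof.
  intros irr tr Hr w s l Hw [t [Ht Hst]] Hcl.
  destruct (ranked_walk_progress R lt rank tr Hr w s l Hw) as [[_ Hp]|Hlt].
  - rewrite (Hp t Ht) in Hst. discriminate.
  - rewrite Hcl in Hlt. exact (irr _ Hlt).
Qed.

Fixpoint latch (s v : nat -> bool) (b : bool) (t : nat) : bool :=
  match t with 0 => b | S t => if s t then v t else latch s v b t end.

Lemma latch_init_irrelevant s v n b b' :
  (exists t, t < n /\ s t = true) -> latch s v b n = latch s v b' n.
Proof.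
  induction n as [|n IH]; intros [t [Ht Hs]]; [lia|].
  simpl. destruct (s n) eqn:E; auto.
  apply IH. exists t. split; auto.
  destruct (Nat.eq_dec t n); [subst; congruence | lia].
Qed.

Section ArcOddGirth.
Variables (D : dgraph) (L : Type) (lt : L -> L -> Prop) (rank : vertex D -> L).
Hypotheses (lt_irrefl : forall a, ~ lt a a)
  (lt_trans : forall a b c, lt a b -> lt b c -> lt a c)
  (rank_mono : forall x y, edge D x y -> lt (rank x) (rank y)).

Variables (e : nat -> vertex (arc_digraph D)) (sg : nat -> bool) (l : nat).
Hypotheses (e_walk : pause_walk (und_adj (edge (arc_digraph D))) e sg l)
  (e_closed : e l = e 0) (e_odd : Nat.odd (count_below sg l) = true).

Let forward (t : nat) : bool :=
  if excluded_middle_informative (head (e t) = tail (e (S t))) then true else false.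

(* The arc [e t] is represented in [D] by its tail if [phase t] and by its head
   otherwise; after each moving step of [e] the phase records whether that step was
   forward, and the initial phase is chosen to make it periodic.  Then [point] moves
   exactly at the moving steps that keep the phase, so it is a closed walk in [D]
   whose length is that of [e] minus the (even, positive) number of phase changes. *)
Let phase : nat -> bool := latch sg forward (latch sg forward false l).
Let point (t : nat) : vertex D := if phase t then tail (e t) else head (e t).
Let real (t : nat) : bool := sg t && Bool.eqb (phase t) (phase (S t)).

Lemma phase_closed : phase l = phase 0.
Proof. apply latch_init_irrelevant with (n := l), count_below_odd_pos, e_odd. Qed.

Lemma phase_succ t : phase (S t) = if sg t then forward t else phase t.
Proof. reflexivity. Qed.

Lemma forward_spec t : t < l -> sg t = true ->
  if forward t then head (e t) = tail (e (S t)) else head (e (S t)) = tail (e t).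
Proof.
  intros Ht Hs. assert (Hstep := e_walk t Ht). rewrite Hs in Hstep.
  unfold forward. destruct (excluded_middle_informative _) as [Fw|Bw]; [exact Fw|].
  destruct Hstep as [Fw|Bw']; [contradiction | exact Bw'].
Qed.

Lemma point_step t : t < l ->
  if real t then
    (if phase t then edge D (point t) (point (S t)) else edge D (point (S t)) (point t))
  else point t = point (S t).
Proof.
  intros Ht. unfold real, point. rewrite phase_succ.
  destruct (sg t) eqn:Hs; simpl.
  - assert (Hf := forward_spec t Ht Hs).
    destruct (forward t), (phase t); simpl; auto;
      [rewrite <- Hf | rewrite Hf]; apply edge_tail_head.
  - assert (Hp := e_walk t Ht). rewrite Hs in Hp. rewrite Hp. destruct (phase t); reflexivity.
Qed.

Lemma point_walk : pause_walk (und_adj (edge D)) point real l.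
Proof.
  intros t Ht. generalize (point_step t Ht). unfold und_adj.
  destruct (real t), (phase t); auto.
Qed.

Lemma point_closed : point l = point 0.
Proof. unfold point. rewrite phase_closed, e_closed. reflexivity. Qed.

Lemma count_real_changes :
  count_below sg l = count_below real l + count_below (changes phase) l.
Proof.
  apply count_below_add. intros t _. unfold real, changes. rewrite phase_succ.
  destruct (sg t), (phase t), (forward t); reflexivity.
Qed.

Lemma even_count_phase_changes : Nat.even (count_below (changes phase) l) = true.
Proof. rewrite even_count_changes, phase_closed. destruct (phase 0); reflexivity. Qed.

(* With the phase constant, [point] is a closed walk along edges of a fixed
   orientation that moves at least once, which the ranking forbids. *)
Lemma count_phase_changes_neq0 : count_below (changes phase) l <> 0.
Proof.
  intros H0. assert (Hc := count_changes_eq0 phase l H0).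
  assert (real_sg : forall t, t < l -> real t = sg t).
  { intros t Ht. unfold real. rewrite (Hc t), (Hc (S t)) by lia.
    rewrite Bool.eqb_reflx. apply Bool.andb_true_r. }
  assert (Hpoint : forall t, t < l -> if sg t then
    (if phase 0 then edge D (point t) (point (S t)) else edge D (point (S t)) (point t))
    else point t = point (S t)).
  { intros t Ht. rewrite <- real_sg, <- (Hc t) by lia. apply point_step, Ht. }
  assert (Hmove := count_below_odd_pos _ _ e_odd).
  destruct (phase 0).
  - exact (ranked_walk_not_closed (edge D) lt rank lt_irrefl lt_trans rank_mono
             point sg l Hpoint Hmove point_closed).
  - exact (ranked_walk_not_closed (fun x y => edge D y x) (fun a b => lt b a) rank
             lt_irrefl (fun a b c Hab Hbc => lt_trans c b a Hbc Hab)
             (fun x y Hxy => rank_mono y x Hxy) point sg l Hpoint Hmove point_closed).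
Qed.

Lemma arc_closed_walk_long (g : nat) :
  odd_girth_ge (und_adj (edge D)) g -> S (S g) <= count_below sg l.
Proof.
  intros HD.
  assert (Hsplit := count_real_changes).
  assert (Hch_even := even_count_phase_changes).
  assert (Hch_pos := count_phase_changes_neq0).
  apply Nat.even_spec in Hch_even as [b Hb].
  assert (Hreal_odd : Nat.odd (count_below real l) = true).
  { apply Nat.odd_spec. apply Nat.odd_spec in e_odd as [a Ha]. exists (a - b). lia. }
  assert (Hg := HD l point real point_walk point_closed Hreal_odd). lia.
Qed.
End ArcOddGirth.

Lemma odd_girth_arc_digraph (D : dgraph) (L : Type) (lt : L -> L -> Prop) (g : nat) :
  (forall a, ~ lt a a) -> (forall a b c, lt a b -> lt b c -> lt a c) ->
  ranked (edge D) lt -> odd_girth_ge (und_adj (edge D)) g ->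
  odd_girth_ge (und_adj (edge (arc_digraph D))) (S (S g)).
Proof.
  intros irr tr [rank Hrank] HD l e s Hw Hcl Hodd.
  exact (arc_closed_walk_long D L lt rank irr tr Hrank e s l Hw Hcl Hodd g HD).
Qed.

Lemma odd_girth_iter_arc_digraph (D : dgraph) (L : Type) (lt : L -> L -> Prop) (m : nat) :
  (forall a, ~ lt a a) -> (forall a b c, lt a b -> lt b c -> lt a c) ->
  ranked (edge D) lt -> odd_girth_ge (und_adj (edge (Nat.iter m arc_digraph D))) (1 + 2 * m).
Proof.
  intros irr tr HD. induction m as [|m IH]; [apply odd_girth_ge1|].
  replace (1 + 2 * S m) with (S (S (1 + 2 * m))) by lia.
  apply (odd_girth_arc_digraph _ L lt); auto. apply ranked_iter_arc_digraph, HD.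
Qed.

Section PairDigraph.
Variables (L : Type) (lt : L -> L -> Prop).
Hypotheses (lt_irrefl : forall a, ~ lt a a)
  (lt_trans : forall a b c, lt a b -> lt b c -> lt a c).

Definition incr_pair : Type := {p : L * L | lt (fst p) (snd p)}.

Definition pair_edge (u v : incr_pair) : Prop :=
  snd (proj1_sig u) = fst (proj1_sig v) \/ lt (snd (proj1_sig v)) (fst (proj1_sig u)).

Lemma pair_edge_irrefl u : ~ pair_edge u u.
Proof.
  destruct u as [[a b] Hab]; unfold pair_edge; simpl in *.
  intros [->|Hba]; [exact (lt_irrefl _ Hab) | exact (lt_irrefl _ (lt_trans _ _ _ Hab Hba))].
Qed.

Lemma pair_edge_asym : digraph pair_edge.
Proof.
  intros [[a b] Hab] [[c d] Hcd]; unfold pair_edge; simpl in *.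
  intros [->|Hdb] [->|Hba]; eapply lt_irrefl; eauto.
Qed.

Hypothesis lt_total : forall a b, a <> b -> lt a b \/ lt b a.
Variable K : Type.
Hypothesis profile_not_injective : forall h : L -> powerset K * powerset K, ~ Injective h.

(* If [b < b'] have the same profile, the colour of [(b, b')] also occurs on some [(a, b)]
   and some [(b', d)], and these three pairs form a directed triangle. *)
Lemma pair_monochromatic_triangle (c : incr_pair -> K) :
  exists x y z, pair_edge x y /\ pair_edge y z /\ pair_edge z x /\ c x = c y /\ c y = c z.
Proof.
  apply NNPP. intros Hno.
  pose (profile := fun b : L =>
    (fun k : K => exists a (H : lt a b), c (exist _ (a, b) H) = k,
     fun k : K => exists d (H : lt b d), c (exist _ (b, d) H) = k)).
  assert (Hdistinct : forall b b', lt b b' -> profile b <> profile b').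
  { intros b b' Hbb' E.
    pose (y := exist (fun p : L * L => lt (fst p) (snd p)) (b, b') Hbb').
    assert (Hin : snd (profile b') (c y)) by (rewrite <- E; exists b', Hbb'; reflexivity).
    assert (Hout : fst (profile b) (c y)) by (rewrite E; exists b, Hbb'; reflexivity).
    destruct Hin as [d [Hd Ed]], Hout as [a [Ha Ea]].
    apply Hno. exists (exist _ (a, b) Ha), y, (exist _ (b', d) Hd).
    unfold pair_edge; simpl. repeat split; auto; congruence. }
  apply (profile_not_injective profile). intros b b' E. apply NNPP. intros Hne.
  destruct (lt_total b b' Hne) as [H|H];
    [exact (Hdistinct b b' H E) | exact (Hdistinct b' b H (eq_sym E))].
Qed.
End PairDigraph.

Section ProductDigraph.
Variables (U W : Type) (A : U -> U -> Prop) (B : W -> W -> Prop).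

Definition prod_edge (p q : U * W) : Prop :=
  und_adj A (fst p) (fst q) /\ B (snd p) (snd q).

Lemma prod_edge_digraph : digraph B -> digraph prod_edge.
Proof. intros HB p q [_ Hpq] [_ Hqp]. exact (HB _ _ Hpq Hqp). Qed.

Lemma prod_edge_dichromatic_gt (K : Type) :
  (forall u, ~ A u u) -> (forall w, ~ B w w) -> uncolourable (und_adj A) (W -> K) ->
  (forall c : W -> K, exists x y z, B x y /\ B y z /\ B z x /\ c x = c y /\ c y = c z) ->
  dichromatic_gt prod_edge K.
Proof.
  intros A_irrefl B_irrefl HA Htri c.
  destruct (HA (fun u w => c (u, w))) as [u [v [Huv Efib]]].
  destruct (Htri (fun w => c (u, w))) as [x [y [z [Bxy [Byz [Bzx [Cxy Cyz]]]]]]].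
  assert (Hvu : und_adj A v u) by (apply und_adj_sym, Huv).
  assert (nuv : u <> v) by (intros ->; destruct Huv as [H|H]; exact (A_irrefl v H)).
  assert (nxy : x <> y) by (intros ->; exact (B_irrefl y Bxy)).
  assert (nyz : y <> z) by (intros ->; exact (B_irrefl z Byz)).
  assert (nzx : z <> x) by (intros ->; exact (B_irrefl x Bzx)).
  assert (Cv : forall w, c (v, w) = c (u, w))
    by (intro w; exact (eq_sym (f_equal (fun h => h w) Efib))).
  exists (c (u, x)). intros Hacyc. apply Hacyc.
  exists 6, (fun i => match i with 0 => (u, x) | 1 => (v, y) | 2 => (u, z)
                             | 3 => (v, x) | 4 => (u, y) | _ => (v, z) end).
  split; [lia|]. split; [split|].
  - intros i j Hi Hj Heq.
    destruct i as [|[|[|[|[|[|i]]]]]]; destruct j as [|[|[|[|[|[|j]]]]]];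
      try lia; try reflexivity; exfalso; injection Heq; intros; congruence.
  - intros i Hi.
    destruct i as [|[|[|[|[|[|i]]]]]]; try lia; split; simpl; auto.
  - intros i Hi.
    destruct i as [|[|[|[|[|[|i]]]]]]; try lia; simpl; rewrite ?Cv; congruence.
Qed.

Lemma prod_edge_odd_cycle_long (g : nat) : odd_girth_ge (und_adj A) g ->
  forall k, Nat.odd k = true -> k < g -> ~ has_cycle_of_length (und_adj prod_edge) k.
Proof.
  intros HA k Hodd Hk [H3 [f [_ Hedge]]].
  assert (Hwalk : pause_walk (und_adj A) (fun i => fst (f (i mod k))) (fun _ => true) k).
  { intros t Ht. rewrite Nat.mod_small, <- Nat.add_1_r by lia.
    destruct (Hedge t Ht) as [[H _]|[H _]]; [exact H | apply und_adj_sym, H]. }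
  assert (Hclosed : fst (f (k mod k)) = fst (f (0 mod k))).
  { rewrite Nat.Div0.mod_same, Nat.Div0.mod_0_l. reflexivity. }
  assert (Hlen := HA k _ _ Hwalk Hclosed).
  rewrite count_below_true in Hlen. specialize (Hlen Hodd). lia.
Qed.
End ProductDigraph.

Theorem corollary4p6 (K : Type) (HK : infinite_type K) (N : nat) :
  exists (V : Type) (E : V -> V -> Prop),
    digraph E /\ dichromatic_gt E K /\
    (forall k, Nat.odd k = true -> k < N -> ~ has_cycle_of_length (und_adj E) k).
Proof.
  (* The construction works for every [K]. *)
  pose (L := powerset (powerset K * powerset K)).
  destruct (WellOrdering.exists_strict_total L) as [ltH [ltH_irrefl [ltH_trans ltH_total]]].
  pose (C := incr_pair L ltH -> K).
  destruct (WellOrdering.exists_strict_total (powerset (Nat.iter N powerset C)))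
    as [lt [lt_irrefl [lt_trans lt_total]]].
  pose (T := DGraph _ lt).
  assert (T_ranked : ranked (edge T) lt) by (exists (fun x => x); auto).
  pose (G := Nat.iter N arc_digraph T).
  assert (G_ranked : ranked (edge G) lt) by apply ranked_iter_arc_digraph, T_ranked.
  exists (vertex G * incr_pair L ltH)%type, (prod_edge _ _ (edge G) (pair_edge L ltH)).
  split; [|split].
  - apply prod_edge_digraph, pair_edge_asym; assumption.
  - apply prod_edge_dichromatic_gt.
    + exact (ranked_irrefl _ lt lt_irrefl G_ranked).
    + apply pair_edge_irrefl; assumption.
    + apply uncolourable_iter_arc_digraph, uncolourable_tournament, lt_total.
    + apply pair_monochromatic_triangle; try assumption.
      intros h. apply powerset_no_injection.
  - intros k Hodd Hk.
    apply (prod_edge_odd_cycle_long _ _ _ _ (1 + 2 * N)); [|exact Hodd|lia].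
    exact (odd_girth_iter_arc_digraph T _ lt N lt_irrefl lt_trans T_ranked).
Qed.
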